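(* Let $k\in\mathbb{N}$ with $6\mid k$, let $h$ be an integer with $\gcd(h,k)=1$, and let $h'$ be an integer with $hh'\equiv-1\pmod{36k}$. Then $$\frac{\omega_{h,\frac{k}{6}}\,\omega_{h,\frac{k}{2}}\, \omega_{h,k}}{\omega_{h, \frac{k}{3}}}= \exp\!\left(-\frac{2\pi i}{36k} \left(18k + h\left(-9-9k-4k^2\right) + h' \left(9-2k^2 \right) \right)\right)$$ and $$\frac{\omega_{h,\frac{k}{3}}\,\omega_{h,\frac{k}{2}}\,\omega_{h,k}}{\omega_{h,\frac{k}{6}}^3} =\exp\!\left(- \frac{2\pi i}{18k} \left(h \left(9-2k^2 \right) + h'\left(-9-k^2 \right) \right)\right).$$
   Context: For coprime integers $h$ and $K\ge1$, $\omega_{h,K}=\exp(\pi i\, s(h,K))$, where $s(h,K)=\sum_{r=1}^{K-1}\frac{r}{K}\left(\frac{hr}{K}-\lfloor \frac{hr}{K}\rfloor-\frac12\right)$ is the Dedekind sum. Equivalently, with $\tilde h$ any integer satisfying $h\tilde h\equiv-1\pmod K$ and $\left(\frac{\cdot}{\cdot}\right)$ the Kronecker symbol: $\omega_{h,K}=\left(\frac{-K}{h}\right)\exp\!\left(-\pi i\left(\frac14(2-hK-h)+\frac1{12}(K-\frac1K)(2h-\tilde h+h^2\tilde h)\right)\right)$ if $h$ is odd, and $\omega_{h,K}=\left(\frac{-h}{K}\right)\exp\!\left(-\pi i\left(\frac14(K-1)+\frac1{12}(K-\frac1K)(2h-\tilde h+h^2\tilde h)\right)\right)$ if $K$ is odd.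 *)

From Stdlib Require Import Reals ZArith Znumtheory.
From Coquelicot Require Import Coquelicot.
Open Scope R_scope.

Definition expi (x : R) : C := (cos x, sin x).

(* Dedekind sum s(h,K) = sum_{r=1}^{K-1} (r/K) (hr/K - floor(hr/K) - 1/2).
   For K > 0, floor(hr/K) is the Euclidean (floor) division (h*r) / K in Z. *)
Definition dedekind_sum (h K : Z) : R :=
  sum_n_m (fun n : nat =>
      let r := Z.of_nat n in
      (IZR r / IZR K) *
      (IZR (h * r) / IZR K - IZR ((h * r) / K)%Z - 1 / 2))
    1 (Z.to_nat K - 1).

Definition omega (h K : Z) : C := expi (PI * dedekind_sum h K).

(* With k = 6m, both identities say that an integer combination of the Dedekind sums
   s(h,K), K in {m, 2m, 3m, 6m}, is congruent modulo 2 to an explicit rational number.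
   Replace h by its residue H modulo 36k, which is positive and prime to 6m.  With
   M(a,K) = sum_{r<K} r (a r mod K) one has 4K^2 s(a,K) = 4M(a,K) - K^2 (K-1), and
   Dedekind reciprocity becomes
     s(H,K) = (H^2 + K^2 + 1)/(12HK) + (H - 2)/4 - Y_K/H,   with Y_K = M(K,H)/H in Z.
   Meyer's formula 2H inv_K = H(H-1)(2H-1) - 6M(K,H), where inv_K counts the inversions
   of r |-> K r mod H, shows that 3Y_K + inv_K does not depend on K; since the parity of
   inv_K is additive in K, the relevant combinations of the Y_K are even.  Reciprocity
   modulo H gives 12K Y_K = K^2 + 1 (mod H), which fixes those combinations modulo H,
   and hh' = -1 (mod 36k) then makes each difference of the two sides an even integer. *)

From Stdlib Require Import Reals ZArith Znumtheory.
From Coquelicot Require Import Coquelicot.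
From Stdlib Require Import List Lia Lra Permutation.

Local Open Scope Z_scope.

Definition zrange (n : nat) : list Z := map Z.of_nat (seq 0 n).

Definition zsum (n : nat) (f : Z -> Z) : Z := fold_right Z.add 0 (map f (zrange n)).

Lemma fold_right_add_app (l1 l2 : list Z) :
  fold_right Z.add 0 (l1 ++ l2) = fold_right Z.add 0 l1 + fold_right Z.add 0 l2.
Proof. induction l1; simpl; lia. Qed.

Lemma fold_right_add_perm (l1 l2 : list Z) :
  Permutation l1 l2 -> fold_right Z.add 0 l1 = fold_right Z.add 0 l2.
Proof. induction 1; simpl; lia. Qed.

Lemma in_zrange n x : In x (zrange n) <-> 0 <= x < Z.of_nat n.
Proof.
  unfold zrange. rewrite in_map_iff. split.
  - intros [y [<- Hy]]. apply in_seq in Hy. lia.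
  - intros Hx. exists (Z.to_nat x). split; [lia|]. apply in_seq. lia.
Qed.

Lemma zsum_succ n f : zsum (S n) f = zsum n f + f (Z.of_nat n).
Proof. unfold zsum, zrange. rewrite seq_S, !map_app, fold_right_add_app. simpl. lia. Qed.

Lemma zsum_ext n f g :
  (forall x, 0 <= x < Z.of_nat n -> f x = g x) -> zsum n f = zsum n g.
Proof.
  induction n as [|n IHn]; intros Hfg; [reflexivity|].
  rewrite !zsum_succ, IHn, Hfg; [reflexivity|lia|intros; apply Hfg; lia].
Qed.

Lemma zsum_add n f g : zsum n (fun x => f x + g x) = zsum n f + zsum n g.
Proof. induction n; [reflexivity|]. rewrite !zsum_succ, IHn. ring. Qed.

Lemma zsum_sub n f g : zsum n (fun x => f x - g x) = zsum n f - zsum n g.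
Proof. induction n; [reflexivity|]. rewrite !zsum_succ, IHn. ring. Qed.

Lemma zsum_scal n c f : zsum n (fun x => c * f x) = c * zsum n f.
Proof. induction n; [exact (eq_sym (Z.mul_0_r c))|]. rewrite !zsum_succ, IHn. ring. Qed.

Lemma zsum_const n c : zsum n (fun _ => c) = c * Z.of_nat n.
Proof. induction n; [exact (eq_sym (Z.mul_0_r c))|]. rewrite !zsum_succ, IHn. lia. Qed.

Lemma zsum_id n : 2 * zsum n (fun x => x) = Z.of_nat n * (Z.of_nat n - 1).
Proof. induction n; [reflexivity|]. rewrite zsum_succ. nia. Qed.

Lemma zsum_sq n :
  6 * zsum n (fun x => x * x) = (Z.of_nat n - 1) * Z.of_nat n * (2 * Z.of_nat n - 1).
Proof. induction n; [reflexivity|]. rewrite zsum_succ. nia. Qed.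

Lemma zsum_shift n f : zsum (S n) f = f 0 + zsum n (fun x => f (x + 1)).
Proof.
  induction n as [|n IHn]; [rewrite zsum_succ; cbn; lia|].
  rewrite zsum_succ, IHn, zsum_succ, Nat2Z.inj_succ. unfold Z.succ. lia.
Qed.

Lemma zsum_comm n m (F : Z -> Z -> Z) :
  zsum n (fun i => zsum m (fun j => F i j)) = zsum m (fun j => zsum n (fun i => F i j)).
Proof.
  induction n as [|n IHn].
  - change (0 = zsum m (fun _ => 0)). now rewrite zsum_const, Z.mul_0_l.
  - rewrite zsum_succ, IHn, <- zsum_add. apply zsum_ext. intros. rewrite zsum_succ. reflexivity.
Qed.

Definition permutes (n : nat) (sigma : Z -> Z) : Prop :=
  (forall x, 0 <= x < Z.of_nat n -> 0 <= sigma x < Z.of_nat n) /\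
  (forall x y, 0 <= x < Z.of_nat n -> 0 <= y < Z.of_nat n -> sigma x = sigma y -> x = y).

Lemma zsum_perm n sigma f :
  permutes n sigma -> zsum n (fun x => f (sigma x)) = zsum n f.
Proof.
  intros [Hrange Hinj].
  assert (Hperm : Permutation (map sigma (zrange n)) (zrange n)).
  { apply Permutation_map_same_l.
    - apply NoDup_map_NoDup_ForallPairs.
      + intros x y Hx Hy. apply Hinj; apply in_zrange; assumption.
      + apply FinFun.Injective_map_NoDup; [intros a b; lia | apply seq_NoDup].
    - intros y Hy. apply in_map_iff in Hy as [x [<- Hx]].
      apply in_zrange. apply in_zrange in Hx. auto. }
  unfold zsum. rewrite <- map_map. apply fold_right_add_perm, Permutation_map, Hperm.
Qed.

Lemma zsum_triangle n (psi : Z -> Z) :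
  zsum n (fun j => zsum (Z.to_nat j) psi) = zsum n (fun i => (Z.of_nat n - 1 - i) * psi i).
Proof.
  induction n as [|n IHn]; [reflexivity|].
  rewrite !zsum_succ, IHn, Nat2Z.id.
  rewrite (zsum_ext n (fun i => (Z.of_nat (S n) - 1 - i) * psi i)
                     (fun i => (Z.of_nat n - 1 - i) * psi i + psi i))
    by (intros; rewrite Nat2Z.inj_succ; ring).
  rewrite zsum_add. lia.
Qed.

Lemma zsum_reflect m (phi : Z -> Z) :
  zsum m (fun i => phi (Z.of_nat m - i)) = zsum m (fun i => phi (i + 1)).
Proof.
  induction m as [|m IHm]; [reflexivity|].
  rewrite zsum_shift, zsum_succ, <- IHm, Z.add_comm.
  f_equal; [apply zsum_ext; intros|]; f_equal; lia.
Qed.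

Lemma zsum_square_split n (F : Z -> Z -> Z) :
  zsum n (fun i => zsum n (fun j => F i j)) =
  zsum n (fun j => zsum (Z.to_nat j) (fun i => F i j + F j i)) + zsum n (fun i => F i i).
Proof.
  induction n as [|n IHn]; [reflexivity|].
  rewrite !zsum_succ, Nat2Z.id.
  rewrite (zsum_ext n (fun i => zsum (S n) (fun j => F i j))
                   (fun i => zsum n (fun j => F i j) + F i (Z.of_nat n)))
    by (intros; apply zsum_succ).
  rewrite zsum_add, IHn, zsum_add.
  change (zsum n (F (Z.of_nat n))) with (zsum n (fun j => F (Z.of_nat n) j)). lia.
Qed.

Lemma zsum_odd_upto N c :
  0 <= c < Z.of_nat N ->
  zsum N (fun s => if ((1 <=? s) && (s <=? c))%bool then 2 * s - 1 else 0) = c * c.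
Proof.
  intros Hc.
  assert (Hall : forall M, zsum M (fun s => if ((1 <=? s) && (s <=? c))%bool then 2 * s - 1 else 0)
                           = Z.max 0 (Z.min c (Z.of_nat M - 1)) ^ 2).
  { intros M. induction M as [|M IHM]; [simpl Z.of_nat; rewrite Z.max_l by lia; reflexivity|].
    rewrite zsum_succ, IHM.
    destruct (1 <=? Z.of_nat M) eqn:E1, (Z.of_nat M <=? c) eqn:E2; simpl andb;
      rewrite ?Z.leb_le, ?Z.leb_gt in E1, E2; nia. }
  rewrite Hall, Z.min_l, Z.max_r by lia. ring.
Qed.

Lemma zsum_count_gt N c :
  0 <= c < Z.of_nat N -> zsum N (fun r => if c <? r then 1 else 0) = Z.of_nat N - 1 - c.
Proof.
  intros Hc.
  assert (Hall : forall M,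
            zsum M (fun r => if c <? r then 1 else 0) = Z.max 0 (Z.of_nat M - 1 - c)).
  { intros M. induction M as [|M IHM]; [simpl Z.of_nat; rewrite Z.max_l by lia; reflexivity|].
    rewrite zsum_succ, IHM.
    destruct (c <? Z.of_nat M) eqn:E; rewrite ?Z.ltb_lt, ?Z.ltb_ge in E; lia. }
  rewrite Hall. lia.
Qed.

Definition mulmod (a K r : Z) : Z := (a * r) mod K.

Definition resid_moment (a K : Z) : Z := zsum (Z.to_nat K) (fun r => r * mulmod a K r).

Definition inversions (n : nat) (sigma : Z -> Z) : Z :=
  zsum n (fun j => zsum (Z.to_nat j) (fun i => if sigma j <? sigma i then 1 else 0)).

Lemma mulmod_injective a K x y :
  0 < K -> Z.gcd K a = 1 -> 0 <= x < K -> 0 <= y < K -> mulmod a K x = mulmod a K y -> x = y.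
Proof.
  intros HK Hg Hx Hy E. unfold mulmod in E.
  assert (Hdiv : (K | a * (x - y))).
  { rewrite Z.mul_sub_distr_l. apply Z.mod_divide; [lia|].
    now rewrite Zminus_mod, E, Z.sub_diag, Zmod_0_l. }
  apply Z.gauss in Hdiv as [t Ht]; [|assumption].
  assert (t = 0) by nia. nia.
Qed.

Lemma mulmod_permutes a K : 0 < K -> Z.gcd K a = 1 -> permutes (Z.to_nat K) (mulmod a K).
Proof.
  intros HK Hg. split.
  - intros x _. pose proof (Z.mod_pos_bound (a * x) K HK). unfold mulmod. lia.
  - intros x y Hx Hy. apply mulmod_injective; auto; lia.
Qed.

Lemma mulmod_gap_indicator a K i j :
  0 < K -> 0 <= i < j -> j < K ->
  K * (if mulmod a K j <? mulmod a K i then 1 else 0)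
  = mulmod a K (j - i) - mulmod a K j + mulmod a K i.
Proof.
  intros HK Hij HjK. unfold mulmod.
  pose proof (Z.div_mod (a * j) K ltac:(lia)). pose proof (Z.mod_pos_bound (a * j) K HK).
  pose proof (Z.div_mod (a * i) K ltac:(lia)). pose proof (Z.mod_pos_bound (a * i) K HK).
  destruct ((a * j) mod K <? (a * i) mod K) eqn:E; [apply Z.ltb_lt in E | apply Z.ltb_ge in E].
  - rewrite <- (Z.mod_unique (a * (j - i)) K (a * j / K - a * i / K - 1)
                          ((a * j) mod K - (a * i) mod K + K)); lia.
  - rewrite <- (Z.mod_unique (a * (j - i)) K (a * j / K - a * i / K)
                          ((a * j) mod K - (a * i) mod K)); lia.
Qed.

Theorem meyer_formula a K :
  0 < K -> Z.gcd K a = 1 ->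
  2 * K * inversions (Z.to_nat K) (mulmod a K) = K * (K - 1) * (2 * K - 1) - 6 * resid_moment a K.
Proof.
  intros HK Hg. unfold inversions, resid_moment.
  set (n := Z.to_nat K). assert (En : Z.of_nat n = K) by (unfold n; lia).
  set (rho := mulmod a K).
  assert (Hrho0 : rho 0 = 0) by (unfold rho, mulmod; now rewrite Z.mul_0_r).
  assert (Hperm : zsum n rho = zsum n (fun x => x))
    by exact (zsum_perm n rho (fun x => x) (mulmod_permutes a K HK Hg)).
  assert (Hcount :
      K * zsum n (fun j => zsum (Z.to_nat j) (fun i => if rho j <? rho i then 1 else 0))
             = zsum n (fun j => zsum (Z.to_nat j) (fun i => rho (i + 1)) - j * rho j
                                + zsum (Z.to_nat j) rho)).
  { rewrite <- zsum_scal. apply zsum_ext. intros j Hj.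
    rewrite <- zsum_scal,
      (zsum_ext _ _ (fun i => rho (j - i) - rho j + rho i))
      by (intros i Hi; apply mulmod_gap_indicator; lia).
    rewrite zsum_add, zsum_sub, zsum_const, <- (zsum_reflect (Z.to_nat j) rho), Z2Nat.id by lia.
    lia. }
  assert (Hshift : zsum n (fun i => (K - 1 - i) * rho (i + 1)) = zsum n (fun d => (K - d) * rho d)).
  { pose proof (zsum_shift n (fun d => (K - d) * rho d)) as Hl.
    rewrite zsum_succ, Hrho0, En in Hl.
    rewrite (zsum_ext n _ (fun x => (K - (x + 1)) * rho (x + 1))) by (intros; f_equal; lia).
    lia. }
  rewrite zsum_add, zsum_sub, !zsum_triangle, En, Hshift in Hcount.
  rewrite (zsum_ext _ (fun d => (K - d) * rho d) (fun d => K * rho d - d * rho d)),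
    (zsum_ext _ (fun i => (K - 1 - i) * rho i) (fun d => (K - 1) * rho d - d * rho d)),
    !zsum_sub, !zsum_scal, Hperm in Hcount by (intros; ring).
  pose proof (zsum_id n) as Hid. rewrite En in Hid.
  lia.
Qed.

Definition flip (sigma : Z -> Z) (i j : Z) : Z :=
  if xorb (i <? j) (sigma i <? sigma j) then 1 else 0.

Lemma flip_diag sigma x : flip sigma x x = 0.
Proof. unfold flip. now rewrite !Z.ltb_irrefl. Qed.

Lemma flip_sym sigma x y : x <> y -> sigma x <> sigma y -> flip sigma y x = flip sigma x y.
Proof.
  intros Hxy Hs. unfold flip.
  destruct (Z.ltb_spec x y), (Z.ltb_spec y x), (Z.ltb_spec (sigma x) (sigma y)),
    (Z.ltb_spec (sigma y) (sigma x)); simpl; lia.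
Qed.

Lemma flip_comp sigma tau i j :
  flip (fun x => sigma (tau x)) i j
  = flip tau i j + flip sigma (tau i) (tau j) - 2 * (flip tau i j * flip sigma (tau i) (tau j)).
Proof. unfold flip. now destruct (i <? j), (tau i <? tau j), (sigma (tau i) <? sigma (tau j)). Qed.

Lemma zsum_square_symmetric_even n (Q : Z -> Z -> Z) :
  (forall i j, 0 <= i < Z.of_nat n -> 0 <= j < Z.of_nat n -> Q j i = Q i j) ->
  (forall i, Q i i = 0) ->
  (2 | zsum n (fun i => zsum n (fun j => Q i j))).
Proof.
  intros Hsym Hdiag. rewrite zsum_square_split.
  rewrite (zsum_ext n (fun i => Q i i) (fun _ => 0)), zsum_const by auto.
  exists (zsum n (fun j => zsum (Z.to_nat j) (fun i => Q i j))).
  rewrite Z.mul_0_l, Z.add_0_r, Z.mul_comm, <- zsum_scal.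
  apply zsum_ext. intros j Hj. rewrite <- zsum_scal. apply zsum_ext. intros i Hi.
  rewrite Z2Nat.id in Hi by lia. rewrite (Hsym i j) by lia. ring.
Qed.

Lemma flips_inversions n sigma :
  permutes n sigma -> zsum n (fun i => zsum n (fun j => flip sigma i j)) = 2 * inversions n sigma.
Proof.
  intros [_ Hinj]. unfold inversions. rewrite zsum_square_split.
  rewrite (zsum_ext n (fun i => flip sigma i i) (fun _ => 0)), zsum_const
    by (intros; apply flip_diag).
  rewrite <- zsum_scal, Z.mul_0_l, Z.add_0_r.
  apply zsum_ext. intros j Hj. rewrite <- zsum_scal. apply zsum_ext. intros i Hi.
  rewrite Z2Nat.id in Hi by lia.
  assert (sigma i <> sigma j) by (intros E; apply Hinj in E; lia).
  unfold flip.
  destruct (Z.ltb_spec i j), (Z.ltb_spec j i), (Z.ltb_spec (sigma i) (sigma j)),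
    (Z.ltb_spec (sigma j) (sigma i)); simpl; lia.
Qed.

Lemma permutes_comp n sigma tau :
  permutes n sigma -> permutes n tau -> permutes n (fun x => sigma (tau x)).
Proof.
  intros [Rs Is] [Rt It]. split; auto.
Qed.

Theorem inversions_comp_parity n sigma tau :
  permutes n sigma -> permutes n tau ->
  (2 | inversions n (fun x => sigma (tau x)) - inversions n sigma - inversions n tau).
Proof.
  intros Hs Ht.
  pose proof (flips_inversions n _ (permutes_comp n sigma tau Hs Ht)) as Hst.
  pose proof (flips_inversions n sigma Hs) as Hsigma.
  pose proof (flips_inversions n tau Ht) as Htau.
  set (Q := fun i j => flip tau i j * flip sigma (tau i) (tau j)).
  assert (HQ : (2 | zsum n (fun i => zsum n (fun j => Q i j)))).
  { destruct Hs as [Rs Is], Ht as [Rt It].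
    apply zsum_square_symmetric_even; [|intros; unfold Q; now rewrite flip_diag].
    intros i j Hi Hj. unfold Q. destruct (Z.eq_dec i j) as [->|Hij]; [reflexivity|].
    assert (tau i <> tau j) by (intros E; apply It in E; auto).
    assert (sigma (tau i) <> sigma (tau j)) by (intros E; apply Is in E; auto).
    rewrite (flip_sym tau i j), (flip_sym sigma (tau i) (tau j)); auto. }
  assert (Hreindex : zsum n (fun i => zsum n (fun j => flip sigma (tau i) (tau j)))
                     = zsum n (fun i => zsum n (fun j => flip sigma i j))).
  { rewrite (zsum_ext n _ (fun i => zsum n (fun j => flip sigma (tau i) j)))
      by (intros; apply (zsum_perm n tau (fun j => flip sigma (tau _) j)), Ht).
    apply (zsum_perm n tau (fun i => zsum n (fun j => flip sigma i j))), Ht. }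
  rewrite (zsum_ext n _ (fun i => zsum n (fun j => flip tau i j)
                                  + zsum n (fun j => flip sigma (tau i) (tau j))
                                  - 2 * zsum n (fun j => Q i j))) in Hst
    by (intros; rewrite <- zsum_scal, <- zsum_add, <- zsum_sub; apply zsum_ext; intros;
        apply flip_comp).
  rewrite zsum_sub, zsum_add, zsum_scal, Hreindex in Hst.
  destruct HQ as [q Hq].
  exists (- q). lia.
Qed.

Lemma inversions_ext n s1 s2 :
  (forall x, s1 x = s2 x) -> inversions n s1 = inversions n s2.
Proof.
  intros E. unfold inversions. apply zsum_ext. intros. apply zsum_ext. intros. now rewrite !E.
Qed.

Corollary mulmod_inversions_parity a b K :
  0 < K -> Z.gcd K a = 1 -> Z.gcd K b = 1 ->
  (2 | inversions (Z.to_nat K) (mulmod (a * b) K)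
       - inversions (Z.to_nat K) (mulmod a K) - inversions (Z.to_nat K) (mulmod b K)).
Proof.
  intros HK Ha Hb.
  rewrite (inversions_ext _ (mulmod (a * b) K) (fun x => mulmod a K (mulmod b K x))).
  - apply inversions_comp_parity; apply mulmod_permutes; assumption.
  - intros x. unfold mulmod. rewrite Zmult_mod_idemp_r. f_equal. ring.
Qed.

Lemma resid_moment_floor a K :
  0 < K ->
  resid_moment a K
  = a * zsum (Z.to_nat K) (fun r => r * r) - K * zsum (Z.to_nat K) (fun r => r * (a * r / K)).
Proof.
  intros HK. unfold resid_moment, mulmod. rewrite <- !zsum_scal, <- zsum_sub.
  apply zsum_ext. intros r _. rewrite (Z.mod_eq (a * r) K) by lia. ring.
Qed.

Lemma zsum_floor_mul a K :
  0 < K -> Z.gcd K a = 1 -> 2 * zsum (Z.to_nat K) (fun r => a * r / K) = (a - 1) * (K - 1).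
Proof.
  intros HK Hg.
  pose proof (zsum_perm _ _ (fun x => x) (mulmod_permutes a K HK Hg)) as Hperm.
  rewrite (zsum_ext _ _ (fun r => a * r - K * (a * r / K))) in Hperm
    by (intros; unfold mulmod; rewrite Z.mod_eq; lia).
  rewrite zsum_sub, !zsum_scal in Hperm.
  pose proof (zsum_id (Z.to_nat K)) as Hid. rewrite Z2Nat.id in Hid by lia.
  apply (Z.mul_reg_l _ _ K); lia.
Qed.

Lemma zsum_floor_mul_sq a K :
  0 < K -> Z.gcd K a = 1 ->
  K * K * zsum (Z.to_nat K) (fun r => (a * r / K) * (a * r / K))
  = (1 - a * a) * zsum (Z.to_nat K) (fun r => r * r)
    + 2 * a * K * zsum (Z.to_nat K) (fun r => r * (a * r / K)).
Proof.
  intros HK Hg.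
  pose proof (zsum_perm _ _ (fun x => x * x) (mulmod_permutes a K HK Hg)) as Hperm.
  rewrite (zsum_ext _ _ (fun r => a * a * (r * r) - 2 * a * K * (r * (a * r / K))
                                  + K * K * ((a * r / K) * (a * r / K)))) in Hperm
    by (intros; unfold mulmod; rewrite Z.mod_eq by lia; ring).
  rewrite zsum_add, zsum_sub, !zsum_scal in Hperm. lia.
Qed.

Section LatticeCount.

Variables a K : Z.
Hypotheses (Ha : 0 < a) (HK : 0 < K) (Hcop : Z.gcd a K = 1).

Lemma floor_mul_le_iff r s :
  0 <= r < K -> 1 <= s < a -> (s <=? a * r / K) = (K * s / a <? r).
Proof.
  intros Hr Hs.
  pose proof (Z.div_mod (a * r) K ltac:(lia)). pose proof (Z.mod_pos_bound (a * r) K HK).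
  pose proof (Z.div_mod (K * s) a ltac:(lia)). pose proof (Z.mod_pos_bound (K * s) a Ha).
  assert (Hne : K * s <> a * r).
  { intros E. assert (Hdiv : (a | K * s)) by (exists r; lia).
    apply Z.gauss in Hdiv as [t Ht]; [|assumption]. destruct (Z.le_gt_cases t 0); nia. }
  destruct (s <=? a * r / K) eqn:E1, (K * s / a <? r) eqn:E2;
    rewrite ?Z.leb_le, ?Z.leb_gt, ?Z.ltb_lt, ?Z.ltb_ge in *; auto; nia.
Qed.

(* Count the lattice points [1 <= s <= a r / K] by columns instead of rows. *)
Lemma zsum_floor_sq_swap :
  zsum (Z.to_nat K) (fun r => (a * r / K) * (a * r / K))
  = (K - 1) * (a - 1) * (a - 1) - 2 * zsum (Z.to_nat a) (fun s => s * (K * s / a))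
    + zsum (Z.to_nat a) (fun s => K * s / a).
Proof.
  set (n := Z.to_nat K). set (p := Z.to_nat a).
  assert (En : Z.of_nat n = K) by (unfold n; lia). assert (Ep : Z.of_nat p = a) by (unfold p; lia).
  assert (Hf : forall r, 0 <= r < K -> 0 <= a * r / K <= a - 1).
  { intros r Hr. pose proof (Z.div_mod (a * r) K ltac:(lia)).
    pose proof (Z.mod_pos_bound (a * r) K HK). nia. }
  assert (Hg : forall s, 0 <= s < a -> 0 <= K * s / a <= K - 1).
  { intros s Hs. pose proof (Z.div_mod (K * s) a ltac:(lia)).
    pose proof (Z.mod_pos_bound (K * s) a Ha). nia. }
  rewrite (zsum_ext n _ (fun r => zsum p (fun s =>
             if ((1 <=? s) && (s <=? a * r / K))%bool then 2 * s - 1 else 0)))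
    by (intros r Hr; symmetry; apply zsum_odd_upto; specialize (Hf r); lia).
  rewrite zsum_comm.
  rewrite (zsum_ext p _ (fun s =>
             (K - 1) * (if ((1 <=? s) && (s <=? a - 1))%bool then 2 * s - 1 else 0)
             - 2 * (s * (K * s / a)) + K * s / a)).
  2:{ intros s Hs. rewrite Ep in Hs.
      destruct (Z.eq_dec s 0) as [->|Hs0].
      - change (1 <=? 0) with false. simpl. rewrite zsum_const, !Z.mul_0_r, Zdiv_0_l. ring.
      - replace (1 <=? s) with true by (symmetry; apply Z.leb_le; lia).
        replace (s <=? a - 1) with true by (symmetry; apply Z.leb_le; lia).
        rewrite (zsum_ext n _ (fun r => (2 * s - 1) * (if K * s / a <? r then 1 else 0)))
          by (intros r Hr; simpl andb; rewrite floor_mul_le_iff by lia;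
              destruct (K * s / a <? r); ring).
        specialize (Hg s ltac:(lia)).
        rewrite zsum_scal, zsum_count_gt, En by lia. simpl andb. ring. }
  rewrite zsum_add, zsum_sub, !zsum_scal, zsum_odd_upto by lia. ring.
Qed.

End LatticeCount.

Theorem resid_moment_reciprocity a K :
  0 < a -> 0 < K -> Z.gcd a K = 1 ->
  12 * a * a * resid_moment a K + 12 * K * K * resid_moment K a
  = a * K * (a * a + K * K + 1) + 3 * a * a * K * K * (a + K - 3).
Proof.
  intros Ha HK Hg. assert (Hg' : Z.gcd K a = 1) by (rewrite Z.gcd_comm; assumption).
  rewrite !resid_moment_floor by assumption.
  pose proof (zsum_floor_sq_swap a K Ha HK Hg) as Hswap.
  pose proof (zsum_floor_mul K a Ha Hg) as Hfloor.
  pose proof (zsum_floor_mul_sq a K HK Hg') as Hsq.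
  pose proof (zsum_sq (Z.to_nat K)) as HsqK. pose proof (zsum_sq (Z.to_nat a)) as Hsqa.
  rewrite Z2Nat.id in HsqK, Hsqa by lia.
  set (F := zsum (Z.to_nat K) (fun r => r * (a * r / K))) in *.
  set (G := zsum (Z.to_nat a) (fun s => s * (K * s / a))) in *.
  set (SK := zsum (Z.to_nat K) (fun r => r * r)) in *.
  set (Sa := zsum (Z.to_nat a) (fun r => r * r)) in *.
  set (Sg := zsum (Z.to_nat a) (fun s => K * s / a)) in *.
  rewrite Hswap in Hsq.
  assert (HFG : 2 * a * K * F + 2 * K * K * G
                = K * K * ((K - 1) * (a - 1) * (a - 1)) + K * K * Sg - (1 - a * a) * SK) by lia.
  transitivity (12 * a * a * a * SK + 12 * K * K * K * Sa
                - 6 * a * (2 * a * K * F + 2 * K * K * G)); [ring|].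
  rewrite HFG.
  transitivity ((a * a * a + a) * (6 * SK) + 2 * K * K * K * (6 * Sa) - 3 * a * K * K * (2 * Sg)
                - 6 * a * K * K * ((K - 1) * (a - 1) * (a - 1))); [ring|].
  rewrite HsqK, Hsqa, Hfloor. ring.
Qed.

Local Open Scope R_scope.

Lemma dedekind_partial_sum h K N :
  (0 < K)%Z ->
  2 * IZR K * IZR K * sum_n_m (fun n : nat =>
      let r := Z.of_nat n in
      (IZR r / IZR K) * (IZR (h * r) / IZR K - IZR ((h * r) / K)%Z - 1 / 2)) 1 N
  = IZR (zsum (S N) (fun r => 2 * r * mulmod h K r - K * r))%Z.
Proof.
  intros HK. assert (HKR : IZR K <> 0) by (apply not_0_IZR; lia).
  induction N as [|N IHN].
  - rewrite sum_n_m_zero, zsum_succ by lia. unfold zero. simpl. rewrite Z.mul_0_r. simpl. ring.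
  - rewrite sum_n_Sm, zsum_succ by lia. change plus with Rplus.
    rewrite Rmult_plus_distr_l, IHN, plus_IZR. f_equal.
    set (r := Z.of_nat (S N)). unfold mulmod. rewrite Z.mod_eq by lia.
    repeat rewrite ?minus_IZR, ?mult_IZR. field. assumption.
Qed.

Lemma dedekind_sum_moment h K :
  (0 < K)%Z ->
  4 * IZR K * IZR K * dedekind_sum h K = IZR (4 * resid_moment h K - K * K * (K - 1)).
Proof.
  intros HK.
  transitivity (2 * (2 * IZR K * IZR K * dedekind_sum h K)); [ring|].
  unfold dedekind_sum. rewrite dedekind_partial_sum by assumption.
  replace (S (Z.to_nat K - 1)) with (Z.to_nat K) by lia.
  rewrite <- mult_IZR, zsum_sub. f_equal.
  rewrite (zsum_ext _ (fun r => 2 * r * mulmod h K r)%Z (fun r => 2 * (r * mulmod h K r))%Z)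
    by (intros; ring).
  rewrite !zsum_scal. fold (resid_moment h K).
  pose proof (zsum_id (Z.to_nat K)). rewrite Z2Nat.id in * by lia. lia.
Qed.

Lemma resid_moment_mod h h' K :
  (0 < K)%Z -> (K | h - h')%Z -> resid_moment h K = resid_moment h' K.
Proof.
  intros HK [u Hu]. unfold resid_moment, mulmod. apply zsum_ext. intros r _. f_equal.
  replace (h * r)%Z with (h' * r + (u * r) * K)%Z by nia. apply Z.mod_add. lia.
Qed.

Lemma dedekind_sum_mod h h' K :
  (0 < K)%Z -> (K | h - h')%Z -> dedekind_sum h K = dedekind_sum h' K.
Proof.
  intros HK Hhh'. assert (HKR : IZR K <> 0) by (apply not_0_IZR; lia).
  apply (Rmult_eq_reg_l (4 * IZR K * IZR K));
    [|repeat apply Rmult_integral_contrapositive_currified; try assumption; lra].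
  rewrite !dedekind_sum_moment, (resid_moment_mod h h' K) by assumption. reflexivity.
Qed.

Theorem dedekind_reciprocity a b :
  (0 < a)%Z -> (0 < b)%Z -> Z.gcd a b = 1%Z ->
  dedekind_sum a b + dedekind_sum b a
  = (IZR a * IZR a + IZR b * IZR b + 1) / (12 * IZR a * IZR b) - 1 / 4.
Proof.
  intros Ha Hb Hg.
  assert (HaR : IZR a <> 0) by (apply not_0_IZR; lia).
  assert (HbR : IZR b <> 0) by (apply not_0_IZR; lia).
  assert (E : 48 * IZR a * IZR a * IZR b * IZR b * (dedekind_sum a b + dedekind_sum b a)
              = IZR (4 * a * b * (a * a + b * b + 1) - 12 * a * a * b * b)).
  { transitivity (12 * IZR a * IZR a * (4 * IZR b * IZR b * dedekind_sum a b)
                  + 12 * IZR b * IZR b * (4 * IZR a * IZR a * dedekind_sum b a)); [ring|].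
    rewrite !dedekind_sum_moment by assumption.
    rewrite <- !mult_IZR, <- plus_IZR. f_equal.
    pose proof (resid_moment_reciprocity a b Ha Hb Hg). lia. }
  apply (Rmult_eq_reg_l (48 * IZR a * IZR a * IZR b * IZR b)).
  - rewrite E, minus_IZR, !mult_IZR, !plus_IZR, !mult_IZR. field. auto.
  - repeat apply Rmult_integral_contrapositive_currified; try assumption; lra.
Qed.

Local Open Scope Z_scope.

Lemma gcd_one_divisor a n d : Z.gcd a n = 1 -> (d | n) -> Z.gcd a d = 1.
Proof.
  rewrite !Zgcd_1_rel_prime. intros Han Hd.
  apply rel_prime_sym, (rel_prime_div n a d); [apply rel_prime_sym|]; assumption.
Qed.

Lemma gcd_one_mod_nonzero a p : 1 < p -> Z.gcd a p = 1 -> a mod p <> 0.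
Proof.
  intros Hp Hg Hmod. apply Z.mod_divide in Hmod; [|lia].
  assert (Hdiv : (p | Z.gcd a p)) by (apply Z.gcd_greatest; [assumption | apply Z.divide_refl]).
  rewrite Hg in Hdiv. apply Z.divide_1_r in Hdiv. lia.
Qed.

Lemma divide_mul_coprime a b n : (a | n) -> (b | n) -> Z.gcd a b = 1 -> (a * b | n).
Proof.
  intros [u ->] Hb Hg. rewrite (Z.mul_comm a b). apply Z.mul_divide_mono_r.
  apply (Z.gauss _ a); [now rewrite Z.mul_comm | now rewrite Z.gcd_comm].
Qed.

Lemma sq_pred_div3 a : Z.gcd a 3 = 1 -> (3 | a * a - 1).
Proof.
  intros Hg. pose proof (gcd_one_mod_nonzero a 3 ltac:(lia) Hg).
  pose proof (Z.div_mod a 3 ltac:(lia)). pose proof (Z.mod_pos_bound a 3 ltac:(lia)).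
  set (u := a / 3) in *. set (r := a mod 3) in *.
  destruct (Z.eq_dec r 1) as [E|E].
  - exists (3 * u * u + 2 * u). subst r. nia.
  - exists (3 * u * u + 4 * u + 1). assert (r = 2) by lia. nia.
Qed.

Lemma positive_coprime_residue h n M :
  1 < n -> 0 < M -> (n | M) -> Z.gcd h n = 1 ->
  exists H, 0 < H /\ Z.gcd H n = 1 /\ (M | h - H).
Proof.
  intros Hn HM [u Hu] Hg. exists (h mod M).
  assert (Hgcd : Z.gcd (h mod M) n = 1).
  { rewrite Z.gcd_comm, Z.mod_eq, Hu by lia.
    replace (h - u * n * (h / (u * n))) with (h + (- u * (h / (u * n))) * n) by ring.
    now rewrite Z.gcd_add_mult_diag_r, Z.gcd_comm. }
  pose proof (Z.mod_pos_bound h M HM).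
  split; [|split; [exact Hgcd|]].
  - destruct (Z.eq_dec (h mod M) 0) as [E|E]; [|lia]. rewrite E, Z.gcd_0_l in Hgcd. lia.
  - exists (h / M). rewrite Z.mod_eq by lia. ring.
Qed.

Definition moment_quot (K H : Z) : Z := resid_moment K H / H.

Section MomentQuotient.

Variables H K : Z.
Hypotheses (HH : 0 < H) (HK : 0 < K) (HHK : Z.gcd H K = 1) (HH6 : Z.gcd H 6 = 1).

(* Meyer's formula makes [6 * resid_moment K H] a multiple of [H]. *)
Lemma moment_quot_exact : resid_moment K H = H * moment_quot K H.
Proof.
  apply Zdivide_Zdiv_eq; [assumption|].
  apply (Z.gauss _ 6); [|assumption].
  pose proof (meyer_formula K H HH HHK).
  exists ((H - 1) * (2 * H - 1) - 2 * inversions (Z.to_nat H) (mulmod K H)). lia.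
Qed.

Lemma moment_quot_inversions :
  6 * moment_quot K H = (H - 1) * (2 * H - 1) - 2 * inversions (Z.to_nat H) (mulmod K H).
Proof.
  pose proof (meyer_formula K H HH HHK). rewrite moment_quot_exact in *.
  apply (Z.mul_reg_l _ _ H); lia.
Qed.

Lemma moment_quot_congr : (H | 12 * K * moment_quot K H - K * K - 1).
Proof.
  pose proof (resid_moment_reciprocity H K HH HK HHK) as Hrec.
  rewrite (moment_quot_exact) in Hrec.
  apply (Z.gauss _ K); [|assumption].
  exists (K * H + 3 * K * K * (H + K - 3) - 12 * resid_moment H K). nia.
Qed.

Lemma dedekind_sum_moment_quot :
  dedekind_sum H K
  = ((IZR H * IZR H + IZR K * IZR K + 1) / (12 * IZR H * IZR K) + (IZR H - 2) / 4
     - IZR (moment_quot K H) / IZR H)%R.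
Proof.
  assert (HHR : IZR H <> 0%R) by (apply not_0_IZR; lia).
  pose proof (dedekind_reciprocity H K HH HK HHK) as Hrec.
  pose proof (dedekind_sum_moment K H HH) as Hmom.
  rewrite moment_quot_exact in Hmom.
  assert (Hdual : dedekind_sum K H = (IZR (moment_quot K H) / IZR H - (IZR H - 1) / 4)%R).
  { apply (Rmult_eq_reg_l (4 * IZR H * IZR H));
      [|repeat apply Rmult_integral_contrapositive_currified; try assumption; lra].
    rewrite Hmom, minus_IZR, !mult_IZR, minus_IZR. field. assumption. }
  rewrite Hdual in Hrec. lra.
Qed.

End MomentQuotient.

Section DivisorsOf6m.

Variables m H : Z.
Hypotheses (Hm : 0 < m) (HH : 0 < H) (Hcop : Z.gcd H (6 * m) = 1).

Local Notation Y K := (moment_quot K H).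
Local Notation I K := (inversions (Z.to_nat H) (mulmod K H)).

Lemma gcd_divisor_6m d : (d | 6 * m) -> Z.gcd H d = 1.
Proof. apply gcd_one_divisor, Hcop. Qed.

Lemma moment_quot_combination_even :
  (2 | Y m + Y (3 * m) + Y (6 * m) - Y (2 * m)) /\
  (2 | Y (3 * m) + Y (2 * m) + Y (6 * m) - 3 * Y m).
Proof.
  assert (H2 : Z.gcd H 2 = 1) by (apply gcd_divisor_6m; exists (3 * m); ring).
  assert (H6 : Z.gcd H 6 = 1) by (apply gcd_divisor_6m; exists m; ring).
  assert (Hgm : Z.gcd H m = 1) by (apply gcd_divisor_6m; exists 6; ring).
  assert (Hg3m : Z.gcd H (3 * m) = 1) by (apply gcd_divisor_6m; exists 2; ring).
  assert (Hinv : forall c, (c | 6) ->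
            6 * Y (c * m) = (H - 1) * (2 * H - 1) - 2 * I (c * m)).
  { intros c [d Hd]. apply moment_quot_inversions; try assumption.
    apply gcd_divisor_6m. exists d. rewrite Hd. ring. }
  pose proof (Hinv 1 ltac:(exists 6; ring)) as Y1. rewrite Z.mul_1_l in Y1.
  pose proof (Hinv 2 ltac:(exists 3; ring)) as Y2.
  pose proof (Hinv 3 ltac:(exists 2; ring)) as Y3.
  pose proof (Hinv 6 ltac:(exists 1; ring)) as Y6.
  destruct (mulmod_inversions_parity 2 m H HH H2 Hgm) as [p1 P1].
  destruct (mulmod_inversions_parity 2 (3 * m) H HH H2 Hg3m) as [p3 P3].
  replace (2 * (3 * m)) with (6 * m) in P3 by ring.
  assert (Hodd : exists e, (H - 1) * (2 * H - 1) = 2 * e).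
  { pose proof (gcd_one_mod_nonzero H 2 ltac:(lia) H2).
    pose proof (Z.div_mod H 2 ltac:(lia)). pose proof (Z.mod_pos_bound H 2 ltac:(lia)).
    exists ((H / 2) * (4 * (H / 2) + 1)). replace H with (2 * (H / 2) + 1) at 1 2 by lia. ring. }
  destruct Hodd as [e He]. rewrite He in Y1, Y2, Y3, Y6.
  split.
  - exists (e - I (3 * m) - p3 + p1 - (Y m + Y (3 * m) + Y (6 * m) - Y (2 * m))). lia.
  - exists (I m - I (3 * m) - I 2 - p1 - p3 - (Y (3 * m) + Y (2 * m) + Y (6 * m) - 3 * Y m)).
    lia.
Qed.

Lemma moment_quot_combination_congr :
  (H | 12 * m * (Y m + Y (3 * m) + Y (6 * m) - Y (2 * m)) - 8 * m * m - 1) /\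
  (H | 12 * m * (Y (3 * m) + Y (2 * m) + Y (6 * m) - 3 * Y m) - 8 * m * m + 2).
Proof.
  assert (H6 : Z.gcd H 6 = 1) by (apply gcd_divisor_6m; exists m; ring).
  assert (Hcongr : forall c, 0 < c -> (c | 6) ->
            (H | 12 * (c * m) * Y (c * m) - (c * m) * (c * m) - 1)).
  { intros c Hc [d Hd]. apply moment_quot_congr; try assumption; [nia|].
    apply gcd_divisor_6m. exists d. rewrite Hd. ring. }
  destruct (Hcongr 1 ltac:(lia) ltac:(exists 6; ring)) as [d1 D1]. rewrite !Z.mul_1_l in D1.
  destruct (Hcongr 2 ltac:(lia) ltac:(exists 3; ring)) as [d2 D2].
  destruct (Hcongr 3 ltac:(lia) ltac:(exists 2; ring)) as [d3 D3].
  destruct (Hcongr 6 ltac:(lia) ltac:(exists 1; ring)) as [d6 D6].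
  split; apply (Z.gauss _ 6); try assumption.
  - exists (6 * d1 + 2 * d3 + d6 - 3 * d2). lia.
  - exists (2 * d3 + 3 * d2 + d6 - 18 * d1). lia.
Qed.

Lemma gcd_216m : Z.gcd (216 * m) H = 1.
Proof.
  assert (H6 : Z.gcd H 6 = 1) by (apply gcd_divisor_6m; exists m; ring).
  rewrite Z.gcd_comm, Zgcd_1_rel_prime. rewrite Zgcd_1_rel_prime in Hcop, H6.
  replace (216 * m) with (6 * 6 * (6 * m)) by ring.
  apply rel_prime_mult; [apply rel_prime_mult|]; assumption.
Qed.

(* Divided by [108 m H], this numerator is the difference of the two sides of the first
   identity with [h] replaced by [H]. *)
Lemma numerator1_divisible h' w :
  (216 * m | H * h' + 1) -> (H | 24 * m * w - 8 * m * m - 1) ->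
  (216 * m * H | (H * h' + 1) * (9 - 72 * m * m) - 144 * m * m * (H * H - 1) - 216 * m * w).
Proof.
  intros [t Ht] [a Ha].
  assert (H3 : Z.gcd H 3 = 1) by (apply gcd_divisor_6m; exists (2 * m); ring).
  destruct (sq_pred_div3 H H3) as [q Hq].
  apply divide_mul_coprime; [| |exact gcd_216m].
  - exists (t * (9 - 72 * m * m) - 2 * m * q - w). rewrite Ht, Hq. ring.
  - exists (h' * (9 - 72 * m * m) - 144 * m * m * H - 9 * a). lia.
Qed.

(* Divided by [54 m H], this numerator is the difference of the two sides of the second
   identity with [h] replaced by [H]. *)
Lemma numerator2_divisible h' w :
  (216 * m | H * h' + 1) -> (H | 12 * m * w - 4 * m * m + 1) ->
  (108 * m * H | - (H * h' + 1) * (9 + 36 * m * m) - 72 * m * m * (H * H - 1) - 108 * m * w).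
Proof.
  intros [t Ht] [a Ha].
  assert (H3 : Z.gcd H 3 = 1) by (apply gcd_divisor_6m; exists (2 * m); ring).
  destruct (sq_pred_div3 H H3) as [q Hq].
  apply divide_mul_coprime.
  - exists (- 2 * t * (9 + 36 * m * m) - 2 * m * q - w). rewrite Ht, Hq. ring.
  - exists (- h' * (9 + 36 * m * m) - 72 * m * m * H - 9 * a). lia.
  - rewrite Z.gcd_comm. apply (gcd_one_divisor _ (216 * m)); [|exists 2; ring].
    rewrite Z.gcd_comm. exact gcd_216m.
Qed.

Lemma dedekind_sum_divisor_6m h K :
  (216 * m | h - H) -> 0 < K -> (K | 6 * m) ->
  dedekind_sum h K
  = ((IZR H * IZR H + IZR K * IZR K + 1) / (12 * IZR H * IZR K) + (IZR H - 2) / 4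
     - IZR (Y K) / IZR H)%R.
Proof.
  intros Hh HK HKd. rewrite (dedekind_sum_mod h H K HK).
  - apply dedekind_sum_moment_quot; try assumption; apply gcd_divisor_6m; [assumption|].
    exists m. ring.
  - apply (Z.divide_trans _ (6 * m)); [assumption|].
    apply (Z.divide_trans _ (216 * m)); [exists 36; ring | assumption].
Qed.

Lemma dedekind_combination1 h h' :
  (216 * m | h - H) -> (216 * m | h * h' + 1) ->
  exists n : Z,
    (PI * (dedekind_sum h m + dedekind_sum h (3 * m) + dedekind_sum h (6 * m)
           - dedekind_sum h (2 * m))
     = - (2 * PI / (36 * IZR (6 * m))) *
         IZR (18 * (6 * m) + h * (-9 - 9 * (6 * m) - 4 * (6 * m) ^ 2)
              + h' * (9 - 2 * (6 * m) ^ 2))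
       + 2 * PI * IZR n)%R.
Proof.
  intros Hh [c Hc].
  rewrite !(dedekind_sum_divisor_6m h) by first [assumption | lia | exists 6; ring | exists 3; ring
    | exists 2; ring | exists 1; ring].
  destruct Hh as [j Hj]. replace h with (H + j * (216 * m)) in * by lia. clear Hj.
  destruct moment_quot_combination_even as [[w Hw] _].
  destruct moment_quot_combination_congr as [Ha _]. rewrite Hw in Ha.
  replace (12 * m * (w * 2)) with (24 * m * w) in Ha by ring.
  assert (Ht : (216 * m | H * h' + 1)) by (exists (c - j * h'); lia).
  pose proof (numerator1_divisible h' w Ht Ha) as HN.
  set (N := (H * h' + 1) * (9 - 72 * m * m) - 144 * m * m * (H * H - 1) - 216 * m * w) in HN.
  destruct HN as [n Hn].
  exists (n - j * (9 + 54 * m + 144 * m * m)).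
  assert (HmR : IZR m <> 0%R) by (apply not_0_IZR; lia).
  assert (HHR : IZR H <> 0%R) by (apply not_0_IZR; lia).
  assert (En : IZR n = (IZR N / (216 * IZR m * IZR H))%R).
  { rewrite Hn, !mult_IZR. field. auto. }
  replace (Y (6 * m)) with (w * 2 - Y m - Y (3 * m) + Y (2 * m)) by lia.
  rewrite (minus_IZR n), En. unfold N. rewrite !Z.pow_2_r.
  repeat rewrite ?plus_IZR, ?minus_IZR, ?mult_IZR, ?opp_IZR.
  field. auto.
Qed.

Lemma dedekind_combination2 h h' :
  (216 * m | h - H) -> (216 * m | h * h' + 1) ->
  exists n : Z,
    (PI * (dedekind_sum h (3 * m) + dedekind_sum h (2 * m) + dedekind_sum h (6 * m)
           - 3 * dedekind_sum h m)
     = - (2 * PI / (18 * IZR (6 * m))) *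
         IZR (h * (9 - 2 * (6 * m) ^ 2) + h' * (-9 - (6 * m) ^ 2))
       + 2 * PI * IZR n)%R.
Proof.
  intros Hh [c Hc].
  rewrite !(dedekind_sum_divisor_6m h) by first [assumption | lia | exists 6; ring | exists 3; ring
    | exists 2; ring | exists 1; ring].
  destruct Hh as [j Hj]. replace h with (H + j * (216 * m)) in * by lia. clear Hj.
  destruct moment_quot_combination_even as [_ [w Hw]].
  destruct moment_quot_combination_congr as [_ Ha]. rewrite Hw in Ha.
  replace (12 * m * (w * 2) - 8 * m * m + 2) with (2 * (12 * m * w - 4 * m * m + 1)) in Ha by ring.
  apply Z.gauss in Ha; [|apply gcd_divisor_6m; exists (3 * m); ring].
  assert (Ht : (216 * m | H * h' + 1)) by (exists (c - j * h'); lia).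
  pose proof (numerator2_divisible h' w Ht Ha) as HN.
  set (N := - (H * h' + 1) * (9 + 36 * m * m) - 72 * m * m * (H * H - 1) - 108 * m * w) in HN.
  destruct HN as [n Hn].
  exists (n + 2 * j * (9 - 72 * m * m)).
  assert (HmR : IZR m <> 0%R) by (apply not_0_IZR; lia).
  assert (HHR : IZR H <> 0%R) by (apply not_0_IZR; lia).
  assert (En : IZR n = (IZR N / (108 * IZR m * IZR H))%R).
  { rewrite Hn, !mult_IZR. field. auto. }
  replace (Y (6 * m)) with (w * 2 - Y (3 * m) - Y (2 * m) + 3 * Y m) by lia.
  rewrite (plus_IZR n), En. unfold N. rewrite !Z.pow_2_r.
  repeat rewrite ?plus_IZR, ?minus_IZR, ?mult_IZR, ?opp_IZR.
  field. auto.
Qed.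

End DivisorsOf6m.

Local Open Scope R_scope.

Lemma expi_add x y : (expi x * expi y)%C = expi (x + y).
Proof. unfold expi, Cmult. simpl. rewrite cos_plus, sin_plus. f_equal; ring. Qed.

Lemma expi_inv x : (/ expi x)%C = expi (- x).
Proof.
  unfold expi, Cinv. simpl. rewrite cos_neg, sin_neg.
  replace (cos x * (cos x * 1) + sin x * (sin x * 1)) with 1
    by (pose proof (sin2_cos2 x) as Hpyth; unfold Rsqr in Hpyth; lra).
  f_equal; field.
Qed.

Lemma expi_sub x y : (expi x / expi y)%C = expi (x - y).
Proof. unfold Cdiv. rewrite expi_inv, expi_add. reflexivity. Qed.

Lemma expi_pow x n : (expi x ^ n)%C = expi (INR n * x).
Proof.
  induction n as [|n IHn].
  - simpl. unfold expi. rewrite Rmult_0_l, cos_0, sin_0. reflexivity.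
  - simpl Cpow. rewrite IHn, expi_add, S_INR. f_equal. ring.
Qed.

Lemma expi_congr x y (n : Z) : x = y + 2 * PI * IZR n -> expi x = expi y.
Proof.
  intros ->. unfold expi.
  destruct (Z_le_gt_dec 0 n) as [Hn|Hn].
  - rewrite <- (Z2Nat.id n Hn), <- INR_IZR_INZ.
    replace (y + 2 * PI * INR (Z.to_nat n)) with (y + 2 * INR (Z.to_nat n) * PI) by ring.
    now rewrite cos_period, sin_period.
  - replace n with (- Z.of_nat (Z.to_nat (- n)))%Z by lia.
    rewrite opp_IZR, <- INR_IZR_INZ.
    set (x := y + 2 * PI * - INR (Z.to_nat (- n))).
    replace y with (x + 2 * INR (Z.to_nat (- n)) * PI) by (unfold x; ring).
    now rewrite cos_period, sin_period.
Qed.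

Open Scope C_scope.

Theorem lemma3p1 (k h h' : Z)
  (hk : (0 < k)%Z) (h6 : (6 | k)%Z) (hcop : Z.gcd h k = 1%Z)
  (hh' : Z.modulo (h * h' + 1) (36 * k) = 0%Z) :
  (omega h (k / 6) * omega h (k / 2) * omega h k) / omega h (k / 3)
    = expi (- (2 * PI / (36 * IZR k)) *
            IZR (18 * k + h * (-9 - 9 * k - 4 * k ^ 2) + h' * (9 - 2 * k ^ 2)))
  /\
  (omega h (k / 3) * omega h (k / 2) * omega h k) / (omega h (k / 6) ^ 3)
    = expi (- (2 * PI / (18 * IZR k)) *
            IZR (h * (9 - 2 * k ^ 2) + h' * (-9 - k ^ 2))).
Proof.
  destruct h6 as [m Hkm]. assert (Hm : (0 < m)%Z) by lia.
  replace k with (6 * m)%Z in * by lia. clear Hkm.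
  rewrite <- (Z.div_unique_exact (6 * m) 6 m), <- (Z.div_unique_exact (6 * m) 2 (3 * m)),
    <- (Z.div_unique_exact (6 * m) 3 (2 * m)) by lia.
  destruct (positive_coprime_residue h (6 * m) (216 * m)) as (H & HH & Hcop & Hdiv);
    [lia | lia | exists 36%Z; ring | exact hcop |].
  assert (Hinv : (216 * m | h * h' + 1)%Z).
  { apply Z.mod_divide; [lia|]. now replace (216 * m)%Z with (36 * (6 * m))%Z by ring. }
  destruct (dedekind_combination1 m H Hm HH Hcop h h' Hdiv Hinv) as [n1 E1].
  destruct (dedekind_combination2 m H Hm HH Hcop h h' Hdiv Hinv) as [n2 E2].
  unfold omega. split.
  - rewrite !expi_add, expi_sub. apply (expi_congr _ _ n1). rewrite <- E1. ring.
  - rewrite expi_pow, !expi_add, expi_sub. apply (expi_congr _ _ n2). rewrite <- E2. simpl. ring.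
Qed.
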